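(* Let $f\colon X\to X$ be a cw-expansive homeomorphism of a compact metric space $X$. Then there are $\delta>0$ and a continuous function $\mathcal L\colon\mathcal C_\delta(X)\to\mathbb{R}$ such that: 1. $\mathcal L(A)\ge0$ for all $A\in\mathcal C_\delta(X)$, with equality if and only if $A$ is a singleton; 2. $\mathcal L(f(A))-2\mathcal L(A)+\mathcal L(f^{-1}(A))=\mathcal L(A)$ whenever $f(A),A,f^{-1}(A)\in\mathcal C_\delta(X)$.
   Context: A continuum is a nonempty compact connected set. $\mathcal C(X)$ is the space of subcontinua of $X$ with the Hausdorff distance, and $\mathcal C_\delta(X)=\{A\in\mathcal C(X):\operatorname{diam}A\le\delta\}$. A homeomorphism $f$ is cw-expansive if there is $\delta>0$ such that $f^n(A)\in\mathcal C_\delta(X)$ for all $n\in\mathbb{Z}$ implies $A\in\mathcal C_0(X)$, i.e. $A$ is a singleton. *)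

From Stdlib Require Import Reals ZArith.
Open Scope R_scope.

Section MetricDefs.
Context {X : Type} (d : X -> X -> R).

Definition is_metric : Prop :=
  (forall x y, 0 <= d x y) /\
  (forall x y, d x y = 0 <-> x = y) /\
  (forall x y, d x y = d y x) /\
  (forall x y z, d x z <= d x y + d y z).

Definition seq_conv (u : nat -> X) (l : X) : Prop :=
  forall eps, 0 < eps -> exists N, forall n, (n >= N)%nat -> d (u n) l < eps.

(** compact subset (sequential compactness, equivalent in metric spaces) *)
Definition compact_set (K : X -> Prop) : Prop :=
  forall u : nat -> X, (forall n, K (u n)) ->
    exists (phi : nat -> nat) (l : X),
      (forall n, (phi n < phi (S n))%nat) /\ K l /\ seq_conv (fun n => u (phi n)) l.

Definition compact_space : Prop := compact_set (fun _ => True).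

Definition open_set (U : X -> Prop) : Prop :=
  forall x, U x -> exists r, 0 < r /\ forall y, d x y < r -> U y.

Definition connected_set (A : X -> Prop) : Prop :=
  ~ exists U V : X -> Prop, open_set U /\ open_set V /\
      (forall x, A x -> U x \/ V x) /\
      (exists x, A x /\ U x) /\ (exists x, A x /\ V x) /\
      (forall x, A x -> U x -> V x -> False).

Definition is_continuum (A : X -> Prop) : Prop :=
  (exists x, A x) /\ compact_set A /\ connected_set A.

Definition diam_le (A : X -> Prop) (delta : R) : Prop :=
  forall x y, A x -> A y -> d x y <= delta.

Definition in_C_delta (delta : R) (A : X -> Prop) : Prop :=
  is_continuum A /\ diam_le A delta.

Definition is_singleton (A : X -> Prop) : Prop :=
  exists x, forall y, A y <-> y = x.

Definition in_nbhd (A B : X -> Prop) (eps : R) : Prop :=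
  forall a, A a -> exists b, B b /\ d a b < eps.

(** Hausdorff distance d_H(A,B) = inf {eps > 0 | A ⊆ U_eps(B), B ⊆ U_eps(A)};
    hausdorff_lt A B eta  means  d_H(A,B) < eta. *)
Definition hausdorff_lt (A B : X -> Prop) (eta : R) : Prop :=
  exists eps, 0 < eps /\ eps < eta /\ in_nbhd A B eps /\ in_nbhd B A eps.

Definition continuous_on_C_delta (delta : R) (L : (X -> Prop) -> R) : Prop :=
  forall A, in_C_delta delta A ->
    forall eps, 0 < eps -> exists eta, 0 < eta /\
      forall B, in_C_delta delta B -> hausdorff_lt A B eta ->
        Rabs (L B - L A) < eps.

Definition continuous_map (f : X -> X) : Prop :=
  forall x eps, 0 < eps -> exists eta, 0 < eta /\
    forall y, d x y < eta -> d (f x) (f y) < eps.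

Definition is_homeomorphism (f g : X -> X) : Prop :=
  continuous_map f /\ continuous_map g /\
  (forall x, g (f x) = x) /\ (forall x, f (g x) = x).

End MetricDefs.

Definition image {X : Type} (h : X -> X) (A : X -> Prop) : X -> Prop :=
  fun y => exists x, A x /\ y = h x.

Fixpoint iter {X : Type} (n : nat) (h : X -> X) (x : X) : X :=
  match n with O => x | S k => h (iter k h x) end.

Definition zpow {X : Type} (f g : X -> X) (n : Z) : X -> X :=
  match n with
  | Z0 => fun x => x
  | Zpos p => iter (Pos.to_nat p) f
  | Zneg p => iter (Pos.to_nat p) g
  end.

Definition cw_expansive {X : Type} (d : X -> X -> R) (f g : X -> X) : Prop :=
  exists delta, 0 < delta /\
    forall A, is_continuum d A ->
      (forall n : Z, in_C_delta d delta (image (zpow f g n) A)) ->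
      is_singleton A.

From Stdlib Require Import Reals Lra Lia Classical ClassicalEpsilon
  FunctionalExtensionality PropExtensionality.
From Coquelicot Require Import Coquelicot.
Open Scope R_scope.

(* Let [e A := min 1 (max 0 (diam A - delta))] measure how far [A] is from
   [C_delta(X)], and for [0 < r < 1/2] let [S_f A := sum_n r^n e(f^n A)] and
   [S_g A := sum_n r^n e(g^n A)].  Both series converge uniformly, so they are
   continuous for the Hausdorff metric; they vanish exactly when the whole
   forward (resp. backward) orbit stays in [C_delta(X)], which for a continuum
   forces a singleton by cw-expansivity.  On [C_delta(X)] one has
   [S_f A = r S_f (f A)] and [S_g (f A) = r S_g A], so [L := S_f + S_g]
   satisfies [L (f A) + L (g A) = (r + 1/r) L A]; the rate
   [r = (3 - sqrt 5)/2] makes [r + 1/r = 3]. *)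

Section Images.
Context {X : Type}.

Lemma set_ext (A B : X -> Prop) : (forall y, A y <-> B y) -> A = B.
Proof.
  intro H; apply functional_extensionality; intro y.
  apply propositional_extensionality; auto.
Qed.

Lemma iter_commute (F : X -> X) n x : iter n F (F x) = F (iter n F x).
Proof. induction n; simpl; congruence. Qed.

Lemma image_iter0 (F : X -> X) A : image (iter 0 F) A = A.
Proof.
  apply set_ext; intro y; split; [intros [x [Ax ->]]; exact Ax|].
  intro Ay; exists y; auto.
Qed.

Lemma image_iterS (F : X -> X) k A :
  image (iter (S k) F) A = image (iter k F) (image F A).
Proof.
  apply set_ext; intro y; split.
  - intros [x [Ax ->]]. exists (F x); split; [exists x; auto|].
    simpl; symmetry; apply iter_commute.
  - intros [z [[x [Ax ->]] ->]]. exists x; split; auto. simpl; apply iter_commute.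
Qed.

Lemma image_cancel (F G : X -> X) A :
  (forall x, G (F x) = x) -> image G (image F A) = A.
Proof.
  intro H. apply set_ext; intro y; split.
  - intros [z [[x [Ax ->]] ->]]. rewrite H; auto.
  - intro Ay. exists (F y); split; [exists y; auto | rewrite H; auto].
Qed.

Lemma image_singleton (F : X -> X) A :
  is_singleton A -> is_singleton (image F A).
Proof.
  intros [x Hx]. exists (F x); intro y; split.
  - intros [z [Az ->]]. apply Hx in Az. congruence.
  - intros ->. exists x; split; [apply Hx|]; auto.
Qed.

End Images.

Section MetricSpace.
Context {X : Type} (d : X -> X -> R).
Hypothesis Hd : is_metric d.

Lemma dist_self x : d x x = 0.
Proof. apply Hd; reflexivity. Qed.

Lemma dist_sym x y : d x y = d y x.
Proof. apply Hd. Qed.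

Lemma dist_triangle x y z : d x z <= d x y + d y z.
Proof. apply Hd. Qed.

Definition uniformly_continuous (F : X -> X) : Prop :=
  forall e, 0 < e -> exists eta, 0 < eta /\
    forall x y, d x y < eta -> d (F x) (F y) < e.

Lemma continuous_map_iter (F : X -> X) n :
  continuous_map d F -> continuous_map d (iter n F).
Proof.
  intro HF; induction n; intros x e He; simpl.
  - exists e; split; auto.
  - destruct (HF (iter n F x) e He) as [e1 [He1 H1]].
    destruct (IHn x e1 He1) as [e2 [He2 H2]].
    exists e2; split; auto.
Qed.

Lemma open_set_preimage (F : X -> X) U :
  continuous_map d F -> open_set d U -> open_set d (fun x => U (F x)).
Proof.
  intros HF oU x Ux. destruct (oU _ Ux) as [r [Hr Hr']].
  destruct (HF x r Hr) as [eta [Heta Hct]]. exists eta; split; auto.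
Qed.

Lemma image_continuum (F : X -> X) A :
  continuous_map d F -> is_continuum d A -> is_continuum d (image F A).
Proof.
  intros HF [[x0 Hx0] [Hc Hconn]]. split; [|split].
  - exists (F x0), x0; auto.
  - intros u Hu.
    destruct (choice (fun n a => A a /\ u n = F a) Hu) as [a Ha].
    destruct (Hc a (fun n => proj1 (Ha n))) as [phi [l [Hinc [Al Hconv]]]].
    exists phi, (F l); split; [auto | split; [exists l; auto|]].
    intros eps Heps. destruct (HF l eps Heps) as [eta [Heta Hct]].
    destruct (Hconv eta Heta) as [N HN]. exists N; intros n Hn.
    rewrite (proj2 (Ha (phi n))), dist_sym. apply Hct.
    rewrite dist_sym. apply HN; auto.
  - intros [U [V [oU [oV [cov [[x1 [[a1 [A1 ->]] U1]]
                              [[x2 [[a2 [A2 ->]] V2]] disj]]]]]]].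
    apply Hconn. exists (fun x => U (F x)), (fun x => V (F x)).
    repeat split; try (apply open_set_preimage; assumption).
    + intros x Ax. apply cov. exists x; auto.
    + exists a1; auto.
    + exists a2; auto.
    + intros x Ax. apply disj. exists x; auto.
Qed.

Lemma in_nbhd_image (F : X -> X) A B eta e c :
  (forall x y, d x y < eta -> d (F x) (F y) < e) -> c < eta ->
  in_nbhd d A B c -> in_nbhd d (image F A) (image F B) e.
Proof.
  intros HF Hc H y [x [Ax ->]]. destruct (H x Ax) as [b [Bb Hb]].
  exists (F b); split; [exists b; auto | apply HF; lra].
Qed.

Definition hausdorff_continuous (L : (X -> Prop) -> R) : Prop :=
  forall A eps, 0 < eps -> exists eta, 0 < eta /\
    forall B, hausdorff_lt d A B eta -> Rabs (L B - L A) < eps.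

Lemma hausdorff_lt_le A B e e' : hausdorff_lt d A B e -> e <= e' -> hausdorff_lt d A B e'.
Proof. intros [c [Hc [Hce Hn]]] He. exists c; repeat split; try apply Hn; lra. Qed.

Lemma hausdorff_continuous_plus L1 L2 :
  hausdorff_continuous L1 -> hausdorff_continuous L2 ->
  hausdorff_continuous (fun A => L1 A + L2 A).
Proof.
  intros H1 H2 A eps Heps.
  destruct (H1 A (eps / 2)) as [e1 [He1 HB1]]; [lra|].
  destruct (H2 A (eps / 2)) as [e2 [He2 HB2]]; [lra|].
  exists (Rmin e1 e2); split; [apply Rmin_pos; auto|].
  intros B HAB.
  specialize (HB1 B (hausdorff_lt_le _ _ _ _ HAB (Rmin_l e1 e2))).
  specialize (HB2 B (hausdorff_lt_le _ _ _ _ HAB (Rmin_r e1 e2))).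
  replace (L1 B + L2 B - (L1 A + L2 A)) with ((L1 B - L1 A) + (L2 B - L2 A)) by ring.
  eapply Rle_lt_trans; [apply Rabs_triang | lra].
Qed.

Lemma uniformly_continuous_upto (Fs : nat -> X -> X) :
  (forall n, uniformly_continuous (Fs n)) -> forall N e, 0 < e ->
  exists eta, 0 < eta /\ forall n, (n < N)%nat ->
    forall x y, d x y < eta -> d (Fs n x) (Fs n y) < e.
Proof.
  intros HFs N e He; induction N as [|N [a [Ha Ha']]].
  - exists 1; split; [lra | intros; lia].
  - destruct (HFs N e He) as [b [Hb Hb']].
    exists (Rmin a b); split; [apply Rmin_pos; auto|].
    intros n Hn x y Hxy. pose proof (Rmin_l a b). pose proof (Rmin_r a b).
    destruct (Nat.eq_dec n N) as [->|Hne]; [apply Hb' | apply Ha']; lra || lia.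
Qed.

Lemma strictly_increasing_ge (phi : nat -> nat) :
  (forall n, (phi n < phi (S n))%nat) -> forall n, (n <= phi n)%nat.
Proof. intros H n; induction n; [lia | specialize (H n); lia]. Qed.

Hypothesis Hcpt : compact_space d.

Lemma compact_uniformly_continuous (F : X -> X) :
  continuous_map d F -> uniformly_continuous F.
Proof.
  intros HF e He. apply NNPP; intro Hn.
  assert (Hbad : forall n : nat, exists p : X * X,
            d (fst p) (snd p) < / INR (S n) /\ e <= d (F (fst p)) (F (snd p))).
  { intro n. apply NNPP; intro Hc. apply Hn. exists (/ INR (S n)). split.
    - apply Rinv_0_lt_compat, lt_0_INR; lia.
    - intros x y Hxy. apply Rnot_le_lt; intro Hle. apply Hc. exists (x, y); auto. }
  destruct (choice _ Hbad) as [u Hu].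
  destruct (Hcpt (fun n => fst (u n)) (fun _ => I))
    as [phi [l [Hinc [_ Hconv]]]].
  destruct (HF l (e / 2)) as [eta [Heta Hcont]]; [lra|].
  destruct (Hconv (eta / 2)) as [N1 HN1]; [lra|].
  destruct (archimed_cor1 (eta / 2)) as [N2 [HN2 HN2']]; [lra|].
  set (n := max N1 N2).
  specialize (HN1 n ltac:(unfold n; lia)); simpl in HN1.
  destruct (Hu (phi n)) as [Hclose Hfar].
  assert (Hsmall : / INR (S (phi n)) <= / INR N2).
  { apply Rinv_le_contravar; [apply lt_0_INR; lia|]. apply le_INR.
    pose proof (strictly_increasing_ge phi Hinc n). unfold n in *; lia. }
  set (x := fst (u (phi n))) in *. set (y := snd (u (phi n))) in *.
  assert (Hx : d l x < eta) by (rewrite dist_sym; lra).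
  assert (Hy : d l y < eta)
    by (pose proof (dist_triangle l x y); rewrite dist_sym in HN1; lra).
  pose proof (Hcont x Hx). pose proof (Hcont y Hy).
  pose proof (dist_triangle (F x) (F l) (F y)).
  rewrite (dist_sym (F x) (F l)) in *. lra.
Qed.

End MetricSpace.

Section Excess.
Context {X : Type} (d : X -> X -> R) (delta : R).
Hypothesis Hd : is_metric d.

Definition truncated_excess (t : R) : R := Rmin 1 (Rmax 0 (t - delta)).

Lemma truncated_excess_bounds t : 0 <= truncated_excess t <= 1.
Proof. unfold truncated_excess, Rmin, Rmax; repeat destruct Rle_dec; lra. Qed.

Lemma truncated_excess_lipschitz s t c :
  0 <= c -> s <= t + c -> truncated_excess s <= truncated_excess t + c.
Proof. intros; unfold truncated_excess, Rmin, Rmax; repeat destruct Rle_dec; lra. Qed.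

Lemma truncated_excess_eq0 t : truncated_excess t = 0 <-> t <= delta.
Proof. unfold truncated_excess, Rmin, Rmax; split; repeat destruct Rle_dec; lra. Qed.

Definition pair_excesses (A : X -> Prop) (t : R) : Prop :=
  t = 0 \/ exists x y, A x /\ A y /\ t = truncated_excess (d x y).

Lemma pair_excesses_bound A : bound (pair_excesses A).
Proof.
  exists 1. intros t [->|[x [y [_ [_ ->]]]]]; [lra | apply truncated_excess_bounds].
Qed.

Lemma pair_excesses_inhabited A : exists t, pair_excesses A t.
Proof. exists 0; left; auto. Qed.

(* [excess A = min 1 (max 0 (diam A - delta))]; the supremum also ranges over [0]
   so that it is defined for the empty set. *)
Definition excess (A : X -> Prop) : R :=
  proj1_sig (completeness _ (pair_excesses_bound A) (pair_excesses_inhabited A)).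

Lemma excess_lub A : is_lub (pair_excesses A) (excess A).
Proof. unfold excess; destruct completeness; auto. Qed.

Lemma excess_ge A x y : A x -> A y -> truncated_excess (d x y) <= excess A.
Proof. intros; apply (proj1 (excess_lub A)); right; exists x, y; auto. Qed.

Lemma excess_ge0 A : 0 <= excess A.
Proof. apply (proj1 (excess_lub A)); left; auto. Qed.

Lemma excess_le A c : 0 <= c ->
  (forall x y, A x -> A y -> truncated_excess (d x y) <= c) -> excess A <= c.
Proof.
  intros Hc H. apply (proj2 (excess_lub A)).
  intros t [->|[x [y [Ax [Ay ->]]]]]; auto.
Qed.

Lemma excess_le1 A : excess A <= 1.
Proof. apply excess_le; [lra | intros; apply truncated_excess_bounds]. Qed.

Lemma excess_bounds A : 0 <= excess A <= 1.
Proof. split; [apply excess_ge0 | apply excess_le1]. Qed.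

Lemma excess_le_nbhd A B e : 0 <= e ->
  in_nbhd d A B e -> excess A <= excess B + 2 * e.
Proof.
  intros He HAB. apply excess_le; [pose proof (excess_ge0 B); lra|].
  intros x y Ax Ay.
  destruct (HAB x Ax) as [x' [Bx' Hx]]. destruct (HAB y Ay) as [y' [By' Hy]].
  assert (Hxy : d x y <= d x' y' + 2 * e).
  { pose proof (dist_triangle d Hd x x' y).
    pose proof (dist_triangle d Hd x' y' y) as Hy'.
    rewrite (dist_sym d Hd y' y) in Hy'. lra. }
  pose proof (truncated_excess_lipschitz _ _ (2 * e) ltac:(lra) Hxy).
  pose proof (excess_ge B x' y' Bx' By'). lra.
Qed.

Lemma excess_eq0 A : excess A = 0 <-> diam_le d A delta.
Proof.
  split.
  - intros H x y Ax Ay. apply truncated_excess_eq0.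
    apply Rle_antisym; [rewrite <- H; apply excess_ge; auto | apply truncated_excess_bounds].
  - intro H. apply Rle_antisym; [|apply excess_ge0]. apply excess_le; [lra|].
    intros x y Ax Ay. rewrite (proj2 (truncated_excess_eq0 _)); [lra | apply H; auto].
Qed.

Lemma excess_singleton A : 0 <= delta -> is_singleton A -> excess A = 0.
Proof.
  intros Hdelta [x Hx]. apply excess_eq0.
  intros y z Ay Az. apply Hx in Ay, Az. subst. rewrite (dist_self d Hd); lra.
Qed.

End Excess.

Lemma Series_zero : Series (fun _ : nat => 0) = 0.
Proof.
  rewrite (Series_ext _ (fun _ => 0 * 0)) by (intro; ring).
  rewrite (Series_scal_l 0 (fun _ => 0)); ring.
Qed.

Lemma Series_geom_half_scal K : Series (fun n => K * (/ 2) ^ n) = 2 * K.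
Proof.
  rewrite Series_scal_l, (is_series_unique _ (/ (1 - / 2))); [field|].
  apply is_series_geom. rewrite Rabs_pos_eq; lra.
Qed.

Lemma pow_le_tail r n N : 0 <= r -> 2 * r <= 1 -> (N <= n)%nat ->
  r ^ n <= (2 * r) ^ N * (/ 2) ^ n.
Proof.
  intros Hr Hr2 HNn.
  replace r with (2 * r * / 2) at 1 by field. rewrite Rpow_mult_distr.
  apply Rmult_le_compat_r; [apply pow_le; lra|].
  replace n with (N + (n - N))%nat by lia. rewrite pow_add.
  assert (Hle1 : (2 * r) ^ (n - N) <= 1) by (rewrite <- (pow1 (n - N)); apply pow_incr; lra).
  pose proof (pow_le (2 * r) N ltac:(lra)). nra.
Qed.

Section BoundedPowerSeries.
Variable r : R.
Hypothesis r_pos : 0 < r.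
Hypothesis r_lt_half : 2 * r < 1.

Lemma ex_series_pow_bounded (a : nat -> R) :
  (forall n, 0 <= a n <= 1) -> ex_series (fun n => r ^ n * a n).
Proof.
  intro Ha. apply (@ex_series_le R_AbsRing R_CompleteNormedModule _ (fun n => r ^ n)).
  - intro n. pose proof (Ha n). pose proof (pow_le r n ltac:(lra)).
    change (Rabs (r ^ n * a n) <= r ^ n). rewrite Rabs_pos_eq; nra.
  - apply ex_series_geom. rewrite Rabs_pos_eq; lra.
Qed.

Lemma Series_pow_bounded_ge0 (a : nat -> R) :
  (forall n, 0 <= a n <= 1) -> 0 <= Series (fun n => r ^ n * a n).
Proof.
  intro Ha. rewrite <- Series_zero.
  apply Series_le; [|apply ex_series_pow_bounded; auto].
  intro n. pose proof (Ha n). pose proof (pow_le r n ltac:(lra)). nra.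
Qed.

(* Every term of the difference is at most [(e + (2 r)^N) (1/2)^n], using
   [r^n <= (2 r)^N (1/2)^n] for [n >= N]. *)
Lemma Series_pow_bounded_close (a b : nat -> R) N e :
  0 <= e -> (forall n, 0 <= a n <= 1) -> (forall n, 0 <= b n <= 1) ->
  (forall n, (n < N)%nat -> Rabs (a n - b n) <= e) ->
  Rabs (Series (fun n => r ^ n * a n) - Series (fun n => r ^ n * b n))
    <= 2 * (e + (2 * r) ^ N).
Proof.
  intros He Ha Hb Hab. set (K := e + (2 * r) ^ N).
  assert (Hterm : forall n, Rabs (r ^ n * a n - r ^ n * b n) <= K * (/ 2) ^ n).
  { intro n.
    replace (r ^ n * a n - r ^ n * b n) with (r ^ n * (a n - b n)) by ring.
    rewrite Rabs_mult, (Rabs_pos_eq (r ^ n)) by (apply pow_le; lra).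
    pose proof (Rabs_pos (a n - b n)). pose proof (pow_le r n ltac:(lra)).
    pose proof (pow_le (2 * r) N ltac:(lra)). pose proof (pow_le (/ 2) n ltac:(lra)).
    unfold K. destruct (Nat.lt_ge_cases n N) as [HnN | HnN].
    - pose proof (Hab n HnN). assert (r ^ n <= (/ 2) ^ n) by (apply pow_incr; lra). nra.
    - assert (Rabs (a n - b n) <= 1) by (pose proof (Ha n); pose proof (Hb n); apply Rabs_le; lra).
      pose proof (pow_le_tail r n N ltac:(lra) ltac:(lra) ltac:(lia)). nra. }
  assert (Hgeo : ex_series (fun n => K * (/ 2) ^ n)).
  { apply (ex_series_scal_l K (fun n => (/ 2) ^ n)), ex_series_geom.
    rewrite Rabs_pos_eq; lra. }
  rewrite <- Series_minus by (apply ex_series_pow_bounded; auto).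
  eapply Rle_trans; [apply Series_Rabs|].
  - apply (@ex_series_le R_AbsRing R_CompleteNormedModule _ (fun n => K * (/ 2) ^ n));
      [intro n | exact Hgeo].
    change (Rabs (Rabs (r ^ n * a n - r ^ n * b n)) <= K * (/ 2) ^ n).
    rewrite Rabs_Rabsolu; apply Hterm.
  - rewrite <- Series_geom_half_scal. apply Series_le; auto.
    intro n; split; [apply Rabs_pos | apply Hterm].
Qed.

End BoundedPowerSeries.

Section OrbitSums.
Context {X : Type} (d : X -> X -> R) (mu : (X -> Prop) -> R) (r : R).
Hypothesis mu_bounds : forall A, 0 <= mu A <= 1.
Hypothesis r_pos : 0 < r.
Hypothesis r_lt_half : 2 * r < 1.

Definition orbit_sum (F : X -> X) (A : X -> Prop) : R :=
  Series (fun n => r ^ n * mu (image (iter n F) A)).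

Lemma orbit_sum_ge0 F A : 0 <= orbit_sum F A.
Proof. apply Series_pow_bounded_ge0; auto. Qed.

Lemma orbit_sum_unfold F A : orbit_sum F A = mu A + r * orbit_sum F (image F A).
Proof.
  unfold orbit_sum. rewrite Series_incr_1 by (apply ex_series_pow_bounded; auto).
  rewrite image_iter0, <- Series_scal_l. f_equal; [simpl; ring|].
  apply Series_ext; intro n. rewrite image_iterS. simpl; ring.
Qed.

Lemma orbit_sum_eq0 F A :
  orbit_sum F A = 0 <-> forall n, mu (image (iter n F) A) = 0.
Proof.
  split.
  - intros H0 n; revert A H0; induction n as [|n IHn]; intros A H0;
      rewrite orbit_sum_unfold in H0;
      pose proof (mu_bounds A); pose proof (orbit_sum_ge0 F (image F A)).
    + rewrite image_iter0. nra.
    + rewrite image_iterS. apply IHn. nra.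
  - intro H0. unfold orbit_sum. rewrite <- Series_zero.
    apply Series_ext; intro n. rewrite H0; ring.
Qed.

Lemma orbit_sum_continuous F :
  (forall A B e, 0 <= e -> in_nbhd d A B e -> mu A <= mu B + 2 * e) ->
  (forall n, uniformly_continuous d (iter n F)) ->
  hausdorff_continuous d (orbit_sum F).
Proof.
  intros Hmu HF A eps Heps.
  destruct (pow_lt_1_zero (2 * r) ltac:(rewrite Rabs_pos_eq; lra) (eps / 8) ltac:(lra))
    as [N HN].
  specialize (HN N (le_n N)). rewrite Rabs_pos_eq in HN by (apply pow_le; lra).
  destruct (uniformly_continuous_upto d (fun n => iter n F) HF N (eps / 16))
    as [eta [Heta Hclose]]; [lra|].
  exists eta; split; auto.
  intros B [c [Hc [Hce [HAB HBA]]]].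
  eapply Rle_lt_trans;
    [apply (Series_pow_bounded_close r r_pos r_lt_half _ _ N (eps / 8)); auto; try lra|].
  - intros n Hn.
    pose proof (in_nbhd_image d _ _ _ _ _ _ (Hclose n Hn) Hce HAB) as HABn.
    pose proof (in_nbhd_image d _ _ _ _ _ _ (Hclose n Hn) Hce HBA) as HBAn.
    pose proof (Hmu _ _ (eps / 16) ltac:(lra) HABn).
    pose proof (Hmu _ _ (eps / 16) ltac:(lra) HBAn).
    apply Rabs_le; lra.
  - lra.
Qed.

Lemma orbit_sum_null F A : mu A = 0 -> orbit_sum F A = r * orbit_sum F (image F A).
Proof. intro H0. rewrite orbit_sum_unfold, H0; ring. Qed.

Lemma orbit_sums_second_difference F G A :
  (forall x, G (F x) = x) -> (forall x, F (G x) = x) -> r * (3 - r) = 1 ->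
  mu (image F A) = 0 -> mu A = 0 -> mu (image G A) = 0 ->
  let L B := orbit_sum F B + orbit_sum G B in
  L (image F A) - 2 * L A + L (image G A) = L A.
Proof.
  intros HGF HFG Hr HFA HA HGA L. unfold L.
  pose proof (orbit_sum_null F A HA) as EF.
  pose proof (orbit_sum_null G A HA) as EG.
  pose proof (orbit_sum_null G (image F A) HFA) as EGF.
  pose proof (orbit_sum_null F (image G A) HGA) as EFG.
  rewrite image_cancel in EGF, EFG by auto.
  rewrite EGF, EFG, EF, EG.
  assert (Hq : (r * (3 - r) - 1) *
            (orbit_sum F (image F A) + orbit_sum G (image G A)) = 0)
    by (rewrite Hr; ring).
  lra.
Qed.

End OrbitSums.

Definition golden_rate : R := (3 - sqrt 5) / 2.

Lemma golden_rate_facts : 0 < golden_rate /\ 2 * golden_rate < 1 /\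
  golden_rate * (3 - golden_rate) = 1.
Proof.
  assert (H5 : sqrt 5 * sqrt 5 = 5) by (apply sqrt_sqrt; lra).
  pose proof (sqrt_pos 5).
  assert (2 < sqrt 5) by nra. assert (sqrt 5 < 3) by nra.
  unfold golden_rate; repeat split; nra.
Qed.

Section Lyapunov.
Context {X : Type} (d : X -> X -> R) (f g : X -> X) (delta : R).
Hypothesis Hd : is_metric d.
Hypothesis Hhomeo : is_homeomorphism d f g.
Hypothesis Hdelta : 0 < delta.

Let mu := excess d delta.
Let r_pos := proj1 golden_rate_facts.
Let r_lt_half := proj1 (proj2 golden_rate_facts).
Let mu_bounds : forall A, 0 <= mu A <= 1 := excess_bounds d delta.

Definition lyapunov (A : X -> Prop) : R :=
  orbit_sum mu golden_rate f A + orbit_sum mu golden_rate g A.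

Lemma lyapunov_continuous :
  compact_space d -> hausdorff_continuous d lyapunov.
Proof.
  intro Hcpt. destruct Hhomeo as [Hf [Hg _]].
  apply hausdorff_continuous_plus;
    apply (orbit_sum_continuous d mu golden_rate mu_bounds r_pos r_lt_half);
    try exact (excess_le_nbhd d delta Hd);
    intro n; apply compact_uniformly_continuous, continuous_map_iter; auto.
Qed.

Lemma lyapunov_ge0 A : 0 <= lyapunov A.
Proof.
  pose proof (orbit_sum_ge0 mu golden_rate mu_bounds r_pos r_lt_half f A).
  pose proof (orbit_sum_ge0 mu golden_rate mu_bounds r_pos r_lt_half g A).
  unfold lyapunov; lra.
Qed.

Lemma lyapunov_singleton A : is_singleton A -> lyapunov A = 0.
Proof.
  intro HA.
  assert (Hnull : forall F n, mu (image (iter n F) A) = 0).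
  { intros F n. apply excess_singleton; [auto | lra | apply image_singleton; auto]. }
  unfold lyapunov.
  rewrite (proj2 (orbit_sum_eq0 _ _ mu_bounds r_pos r_lt_half f A) (Hnull f)),
          (proj2 (orbit_sum_eq0 _ _ mu_bounds r_pos r_lt_half g A) (Hnull g)).
  ring.
Qed.

Lemma orbit_in_C_delta F A : continuous_map d F -> is_continuum d A ->
  orbit_sum mu golden_rate F A = 0 -> forall n, in_C_delta d delta (image (iter n F) A).
Proof.
  intros HF HA H0 n. split.
  - apply image_continuum; auto. apply continuous_map_iter; auto.
  - apply (excess_eq0 d delta).
    exact (proj1 (orbit_sum_eq0 _ _ mu_bounds r_pos r_lt_half F A) H0 n).
Qed.

Lemma lyapunov_eq0_singleton A :
  (forall B, is_continuum d B ->
     (forall n : Z, in_C_delta d delta (image (zpow f g n) B)) -> is_singleton B) ->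
  is_continuum d A -> lyapunov A = 0 -> is_singleton A.
Proof.
  intros Hcw HA H0. destruct Hhomeo as [Hf [Hg _]].
  pose proof (orbit_sum_ge0 mu golden_rate mu_bounds r_pos r_lt_half f A).
  pose proof (orbit_sum_ge0 mu golden_rate mu_bounds r_pos r_lt_half g A).
  unfold lyapunov in H0.
  assert (Hf0 : orbit_sum mu golden_rate f A = 0) by lra.
  assert (Hg0 : orbit_sum mu golden_rate g A = 0) by lra.
  apply Hcw; auto. intros [|p|p].
  - exact (orbit_in_C_delta f A Hf HA Hf0 0).
  - exact (orbit_in_C_delta f A Hf HA Hf0 _).
  - exact (orbit_in_C_delta g A Hg HA Hg0 _).
Qed.

Lemma lyapunov_second_difference A :
  in_C_delta d delta (image f A) -> in_C_delta d delta A ->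
  in_C_delta d delta (image g A) ->
  lyapunov (image f A) - 2 * lyapunov A + lyapunov (image g A) = lyapunov A.
Proof.
  destruct Hhomeo as [_ [_ [Hgf Hfg]]].
  intros [_ HfA] [_ HA] [_ HgA].
  apply (orbit_sums_second_difference mu golden_rate mu_bounds r_pos r_lt_half);
    try apply golden_rate_facts; auto; apply (excess_eq0 d delta); auto.
Qed.

End Lyapunov.

Theorem mainTheorem18 (X : Type) (d : X -> X -> R) (f g : X -> X)
  (Hd : is_metric d) (Hcpt : compact_space d)
  (Hhomeo : is_homeomorphism d f g) (Hcw : cw_expansive d f g) :
  exists delta : R, 0 < delta /\
  exists L : (X -> Prop) -> R,
    continuous_on_C_delta d delta L /\
    (forall A, in_C_delta d delta A ->
       0 <= L A /\ (L A = 0 <-> is_singleton A)) /\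
    (forall A, in_C_delta d delta (image f A) -> in_C_delta d delta A ->
       in_C_delta d delta (image g A) ->
       L (image f A) - 2 * L A + L (image g A) = L A).
Proof.
  destruct Hcw as [delta [Hdelta Hsing]].
  exists delta; split; auto.
  exists (lyapunov d f g delta); split; [|split].
  - intros A _ eps Heps.
    destruct (lyapunov_continuous d f g delta Hd Hhomeo Hcpt A eps Heps)
      as [eta [Heta Hcont]].
    exists eta; split; auto.
  - intros A [HA _]. split; [apply lyapunov_ge0|]. split.
    + apply lyapunov_eq0_singleton; auto.
    + apply lyapunov_singleton; auto; lra.
  - apply lyapunov_second_difference; auto.
Qed.
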